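(* Let $H$, $G$ be real Hilbert spaces, $Z$ a nonempty closed convex subset of $H\times G$, $x_0\in H\times G$, $\{\lambda_n\}\subset(0,1]$, $\{H_n\}$ closed convex sets with $Z\subset H_n$, and let $\{x_n\}$ be generated by $x_{n+1/2}=x_n+\lambda_n(P_{H_n}(x_n)-x_n)$, $x_{n+1}=P_{H(x_0,x_n)\cap C_n}(x_0)$, where each $C_n$ is closed convex with $Z\subset C_n\subset H(x_n,x_{n+1/2})$. Let $\bar x=P_Z(x_0)$, $w=\tfrac12(x_0+\bar x)$, $r=\|w-x_0\|$ and $b_n:=4r^2-\|x_n-x_0\|^2$. Then: (i) $\|w-x_n\|\le\tfrac12\|x_0-\bar x\|$ for all $n$; (ii) $b_n\ge0$ and $\|x_n-\bar x\|^2\le b_n$ for all $n$; (iii) if $x_n\in H(x_0,x_{n-1})$ for all $n\ge1$, then $\{b_n\}$ is nonincreasing; moreover, if for some $n\ge1$ we have $x_{n-1}\neq x_n$, then $\|\bar x-x_n\|^2<\|x_0-\bar x\|^2-\|x_0-x_{n-1}\|^2$ and $b_n<b_{n-1}$.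
   Context: For $x,y\in H\times G$, $H(x,y):=\{h:\ \langle h-y\mid x-y\rangle\le 0\}$. $P_D$ is the metric projection onto a nonempty closed convex set $D$. *)

From HB Require Import structures.
From mathcomp Require Import all_boot all_order all_algebra.
From mathcomp Require Import all_classical all_reals all_analysis.
Set Implicit Arguments. Unset Strict Implicit. Unset Printing Implicit Defensive.
Import Order.TTheory GRing.Theory Num.Theory.
Import numFieldNormedType.Exports.
Local Open Scope classical_set_scope.
Local Open Scope ring_scope.

Definition is_hilbert_inner (R : realType) (V : completeNormedModType R)
    (ip : V -> V -> R) : Prop :=
  [/\ forall x y, ip x y = ip y x,
      forall (a : R) x y z, ip (a *: x + y) z = a * ip x z + ip y z &
      forall x, ip x x = `|x| ^+ 2].

Section Prod.
Variables (R : realType) (H G : completeNormedModType R).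
Variables (ipH : H -> H -> R) (ipG : G -> G -> R).

Definition pinner (x y : H * G) : R := ipH x.1 y.1 + ipG x.2 y.2.
Definition pnorm (x : H * G) : R := Num.sqrt (pinner x x).

Definition halfsp (x y : H * G) : set (H * G) :=
  [set h | pinner (h - y) (x - y) <= 0].

Definition pconvex (D : set (H * G)) : Prop :=
  forall x y (t : R), D x -> D y -> 0 <= t <= 1 -> D (t *: x + (1 - t) *: y).

Definition is_proj (D : set (H * G)) (x p : H * G) : Prop :=
  D p /\ forall y, D y -> pnorm (x - p) <= pnorm (x - y).

Definition metric_proj (D : set (H * G)) (x : H * G) : H * G :=
  xget x [set p | is_proj D x p].
End Prod.

(* Every iterate satisfies Z ⊆ H(x_0, x_n).  This is trivial for n = 0, and it
   passes to x_{n+1} because x_{n+1} is the projection of x_0 onto the convex set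
   H(x_0, x_n) ∩ C_n ⊇ Z, while a nearest point p of a convex set D to x always
   satisfies D ⊆ H(x, p).  In particular <x̄ - x_n | x_0 - x_n> <= 0: x_n sees the
   segment [x_0, x̄] under an obtuse angle, i.e. lies in the ball with diameter
   [x_0, x̄].  Then (i) is the Apollonius identity for the midpoint w, (ii) is the
   obtuse-angle Pythagoras inequality at x_n, and (iii) is the same inequality at
   x_n for the angle between x_0 and x_{n+1}.  The existence of x̄ = P_Z(x_0) is
   the Hilbert projection theorem, proved with a minimizing sequence that the
   parallelogram law makes Cauchy. *)

From HB Require Import structures.
From mathcomp Require Import all_boot all_order all_algebra.
From mathcomp Require Import all_classical all_reals all_analysis.
From mathcomp Require Import ring lra.
Import Order.TTheory GRing.Theory Num.Theory.
Import numFieldNormedType.Exports.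
Local Open Scope classical_set_scope.
Local Open Scope ring_scope.

Section SemiInnerProduct.
Context {R : realType} {V : lmodType R} {dot : V -> V -> R}.
Hypothesis dotC : forall u v, dot u v = dot v u.
Hypothesis dotZDl : forall a u v w, dot (a *: u + v) w = a * dot u w + dot v w.

Lemma dot0l v : dot 0 v = 0.
Proof. by have := dotZDl 1 0 0 v; rewrite scaler0 addr0 mul1r; lra. Qed.

Lemma dotDl u v w : dot (u + v) w = dot u w + dot v w.
Proof. by have := dotZDl 1 u v w; rewrite scale1r mul1r. Qed.

Lemma dotZl a u w : dot (a *: u) w = a * dot u w.
Proof. by rewrite -[a *: u]addr0 dotZDl dot0l addr0. Qed.

Lemma dotNl u w : dot (- u) w = - dot u w.
Proof. by rewrite -scaleN1r dotZl mulN1r. Qed.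

Lemma dot0r v : dot v 0 = 0.
Proof. by rewrite dotC dot0l. Qed.

Lemma dotDr u v w : dot w (u + v) = dot w u + dot w v.
Proof. by rewrite dotC dotDl !(dotC w). Qed.

Lemma dotZr a u w : dot w (a *: u) = a * dot w u.
Proof. by rewrite dotC dotZl dotC. Qed.

Lemma dotNr u w : dot w (- u) = - dot w u.
Proof. by rewrite dotC dotNl dotC. Qed.

Local Ltac dot_expand := rewrite ?(dotDl, dotNl, dotZl, dotDr, dotNr, dotZr).

Lemma dot_sqrB u v : dot (u - v) (u - v) = dot u u - 2 * dot u v + dot v v.
Proof. by dot_expand; rewrite (dotC v u); ring. Qed.

Lemma dot_sqrBC u v : dot (u - v) (u - v) = dot (v - u) (v - u).
Proof. by rewrite !dot_sqrB (dotC v u); ring. Qed.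

Lemma dot_apollonius p q y :
  dot (2^-1 *: (p + q) - y) (2^-1 *: (p + q) - y) =
  4^-1 * dot (p - q) (p - q) + dot (q - y) (p - y).
Proof.
dot_expand; rewrite (dotC q p) (dotC y p) (dotC y q).
lra.
Qed.

Lemma dot_obtuse_pythagoras {p y z} : dot (z - y) (p - y) <= 0 ->
  dot (y - p) (y - p) + dot (z - y) (z - y) <= dot (z - p) (z - p).
Proof.
have -> : z - p = (z - y) - (p - y) by rewrite opprB addrA subrK.
by rewrite (dot_sqrB (z - y)) (dot_sqrBC y p); lra.
Qed.

Lemma near_minimizers_close x z1 z2 d e1 e2 :
  d <= dot (x - 2^-1 *: (z1 + z2)) (x - 2^-1 *: (z1 + z2)) ->
  dot (x - z1) (x - z1) <= d + e1 -> dot (x - z2) (x - z2) <= d + e2 ->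
  dot (z1 - z2) (z1 - z2) <= 2 * e1 + 2 * e2.
Proof.
rewrite dot_sqrBC dot_apollonius (dot_sqrBC x z1) (dot_sqrBC x z2).
have -> : z1 - z2 = (z1 - x) - (z2 - x) by rewrite opprB addrA subrK.
rewrite (dot_sqrB (z1 - x)) (dotC (z2 - x)); lra.
Qed.

Hypothesis dot_ge0 : forall v, 0 <= dot v v.

Lemma segment_minimizer_obtuse x p y :
  (forall t, 0 < t <= 1 ->
     dot (x - p) (x - p) <=
     dot (x - (t *: y + (1 - t) *: p)) (x - (t *: y + (1 - t) *: p))) ->
  dot (y - p) (x - p) <= 0.
Proof.
(* Minimality at t gives [2 c <= t q]; the choice [t = c / (c + q)] contradicts [c > 0]. *)
move=> pmin; set c := dot (y - p) (x - p); set q := dot (y - p) (y - p).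
rewrite leNgt; apply/negP => c_gt0.
have q_ge0 : 0 <= q by exact: dot_ge0.
have cq_gt0 : 0 < c + q by lra.
pose t := c / (c + q).
have t_gt0 : 0 < t by rewrite divr_gt0.
have tcq : t * (c + q) = c by rewrite mulfVK ?gt_eqF.
have : dot (x - p) (x - p) <= dot (x - p - t *: (y - p)) (x - p - t *: (y - p)).
  have -> : x - p - t *: (y - p) = x - (t *: y + (1 - t) *: p).
    by rewrite scalerBr scalerBl scale1r [in RHS]addrCA [in RHS]opprD [in RHS]addrA.
  by apply: pmin; rewrite t_gt0 /= ler_pdivrMr // mul1r lerDl.
rewrite (dot_sqrB (x - p)) dotZr dotZl dotZr (dotC (x - p)) -/c -/q.
nra.
Qed.

End SemiInnerProduct.

Lemma cauchy_seq_cvg (R : numFieldType) (V : completeNormedModType R) (u : nat -> V) :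
  (forall e : R, 0 < e -> exists N, forall k, (N <= k)%N -> `|u N - u k| < e) ->
  cvg (u @ \oo).
Proof.
move=> uC; apply: cauchy_cvg; apply: cauchy_exP => e /uC[N uN].
by exists (u N), N => // k /uN; rewrite -ball_normE.
Qed.

Section ProductHilbert.
Context {R : realType} {H G : completeNormedModType R}.
Context {ipH : H -> H -> R} {ipG : G -> G -> R}.
Hypotheses (hH : is_hilbert_inner ipH) (hG : is_hilbert_inner ipG).
Local Notation dot := (pinner ipH ipG).
Local Notation pn := (pnorm ipH ipG).
Local Notation halfsp := (halfsp ipH ipG).
Local Notation is_proj := (is_proj ipH ipG).
Local Notation metric_proj := (metric_proj ipH ipG).

Lemma pinnerC u v : dot u v = dot v u.
Proof. by case: hH => CH _ _; case: hG => CG _ _; rewrite /pinner CH CG. Qed.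

Lemma pinnerZDl a u v w : dot (a *: u + v) w = a * dot u w + dot v w.
Proof. by case: hH => _ LH _; case: hG => _ LG _; rewrite /pinner /= LH LG; lra. Qed.

Lemma pinner_self v : dot v v = `|v.1| ^+ 2 + `|v.2| ^+ 2.
Proof. by case: hH => _ _ NH; case: hG => _ _ NG; rewrite /pinner NH NG. Qed.

Lemma pinner_ge0 v : 0 <= dot v v.
Proof. by rewrite pinner_self addr_ge0 ?sqr_ge0. Qed.

Lemma pinner_gt0 v : v != 0 -> 0 < dot v v.
Proof.
move=> v_neq0; rewrite lt_neqAle pinner_ge0 andbT eq_sym; apply: contra v_neq0.
rewrite pinner_self paddr_eq0 ?sqr_ge0 // !sqrf_eq0 !normr_eq0 => /andP[/eqP v1 /eqP v2].
by case: v v1 v2 => a b /= -> ->.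
Qed.

Lemma pnorm_sqr v : pn v ^+ 2 = dot v v.
Proof. by rewrite sqr_sqrtr ?pinner_ge0. Qed.

Lemma pnorm_le u v : (pn u <= pn v) = (dot u u <= dot v v).
Proof. by rewrite ler_sqrt ?pinner_ge0. Qed.

Lemma pdistC u v : pn (u - v) = pn (v - u).
Proof. by rewrite /pnorm (dot_sqrBC pinnerC pinnerZDl). Qed.

Lemma pinner_continuous : continuous (fun v => dot v v).
Proof.
have -> : (fun v => dot v v) = fun v => `|v.1| ^+ 2 + `|v.2| ^+ 2.
  by apply: funext => v; exact: pinner_self.
move=> v; apply: cvgD; rewrite !expr2; apply: cvgM; apply: cvg_norm;
  by [apply: cvg_fst | apply: cvg_snd].
Qed.

Lemma pinner_cauchy_cvg (u : nat -> H * G) :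
  (forall e : R, 0 < e -> exists N, forall k, (N <= k)%N ->
     dot (u N - u k) (u N - u k) < e) ->
  exists p : H * G, u @ \oo --> p.
Proof.
move=> uC.
have small_tail e : 0 < e -> exists N, forall k, (N <= k)%N ->
    `|(u N - u k).1| ^+ 2 < e ^+ 2 /\ `|(u N - u k).2| ^+ 2 < e ^+ 2.
  move=> e_gt0; have [N uN] := uC _ (exprn_gt0 2 e_gt0).
  exists N => k /uN; rewrite pinner_self => ltNk.
  by split; apply: le_lt_trans ltNk; rewrite ?lerDl ?lerDr sqr_ge0.
have cvg1 : cvg ((fun k => (u k).1) @ \oo).
  apply: cauchy_seq_cvg => e e_gt0; have [N uN] := small_tail e e_gt0.
  by exists N => k /uN[+ _]; rewrite ltr_pXn2r ?nnegrE ?normr_ge0 ?ltW.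
have cvg2 : cvg ((fun k => (u k).2) @ \oo).
  apply: cauchy_seq_cvg => e e_gt0; have [N uN] := small_tail e e_gt0.
  by exists N => k /uN[_]; rewrite ltr_pXn2r ?nnegrE ?normr_ge0 ?ltW.
exists (lim ((fun k => (u k).1) @ \oo), lim ((fun k => (u k).2) @ \oo)).
have -> : u = (fun k => ((u k).1, (u k).2)) by apply: funext => k; case: (u k).
exact: cvg_pair.
Qed.

Lemma pconvexI (A B : set (H * G)) : pconvex A -> pconvex B -> pconvex (A `&` B).
Proof.
by move=> Acvx Bcvx u v t [Au Bu] [Av Bv] t01; split; [apply: Acvx | apply: Bcvx].
Qed.

Lemma halfsp_convex p y : pconvex (halfsp p y).
Proof.
move=> u v t; rewrite /halfsp /= => hu hv /andP[t_ge0 t_le1].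
have -> : t *: u + (1 - t) *: v - y = t *: (u - y) + (1 - t) *: (v - y).
  by rewrite !scalerBr addrACA -opprD -scalerDl subrKC scale1r.
rewrite pinnerZDl (dotZl pinnerZDl); nra.
Qed.

Lemma halfspxx p : halfsp p p = setT.
Proof.
by rewrite predeqE => y; rewrite /halfsp /= subrr (dot0r pinnerC pinnerZDl) lexx.
Qed.

Lemma is_proj_halfsp D x p : pconvex D -> is_proj D x p -> D `<=` halfsp x p.
Proof.
move=> Dcvx [Dp pmin] y Dy; rewrite /halfsp /=.
apply: (segment_minimizer_obtuse pinnerC pinnerZDl pinner_ge0) => t /andP[t_gt0 t_le1].
by rewrite -!pnorm_le; apply: pmin; apply: Dcvx; rewrite ?(ltW t_gt0) ?t_le1.
Qed.

(* No existence hypothesis is needed: if x has no nearest point in D, then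
   [metric_proj D x] is the default value x, and [halfsp x x] is everything. *)
Lemma metric_proj_halfsp D x : pconvex D -> D `<=` halfsp x (metric_proj D x).
Proof.
move=> Dcvx; rewrite /metric_proj.
by case: xgetP => [p _ /(is_proj_halfsp _ _ _ Dcvx) //|_]; rewrite halfspxx.
Qed.

Lemma is_proj_exists D x : D !=set0 -> closed D -> pconvex D -> exists p, is_proj D x p.
Proof.
move=> [z0 Dz0] Dcl Dcvx.
pose f z := dot (x - z) (x - z).
pose S := [set f z | z in D].
have S_inf : has_inf S.
  by split; [exists (f z0), z0 | exists 0 => _ [z _ <-]; exact: pinner_ge0].
pose d := inf S.
have d_le z : D z -> d <= f z by move=> Dz; apply: (ge_inf S_inf.2); exists z.
have near_inf k : exists z, D z /\ f z <= d + k.+1%:R^-1.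
  have k_gt0 : 0 < k.+1%:R^-1 :> R by rewrite invr_gt0 ltr0n.
  have [_ [z Dz <-] fz] := inf_adherent k_gt0 S_inf.
  by exists z; split; last exact: ltW.
have [z zP] := choice near_inf.
have z_close k m : dot (z k - z m) (z k - z m) <= 2 * k.+1%:R^-1 + 2 * m.+1%:R^-1.
  have [[Dk fk] [Dm fm]] := (zP k, zP m).
  apply: (near_minimizers_close pinnerC pinnerZDl _ _ _ _ _ _ _ fk fm); apply: d_le.
  have -> : 2^-1 *: (z k + z m) = 2^-1 *: z k + (1 - 2^-1) *: z m.
    by rewrite scalerDr (_ : 1 - 2^-1 = 2^-1 :> R) //; lra.
  by apply: Dcvx => //; apply/andP; split; lra.
have [p zp] : exists p : H * G, z @ \oo --> p.
  apply: pinner_cauchy_cvg => e e_gt0.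
  have e4 : 0 < e / 4 by rewrite divr_gt0.
  have [N _ NP] := near_infty_natSinv_lt (PosNum e4).
  exists N => k Nk; apply: (le_lt_trans (z_close N k)).
  have /= := NP N (leqnn N); have /= := NP k Nk.
  set a := k.+1%:R^-1; set c := N.+1%:R^-1; lra.
have fp : f p <= d.
  have fz : (fun k => f (z k)) @ \oo --> f p.
    exact: (continuous_cvg _ (@pinner_continuous (x - p)) (cvgB (cvg_cst x) zp)).
  have dz : (fun k => d + k.+1%:R^-1) @ \oo --> d + 0
    by apply: cvgD; [exact: cvg_cst | exact: cvg_harmonic].
  by rewrite -[d]addr0; apply: (ler_cvg_to fz dz); apply: nearW => k; case: (zP k).
exists p; split.
  by apply: (closed_cvg _ Dcl _ _ zp); apply: nearW => k; case: (zP k).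
by move=> y Dy; rewrite pnorm_le; exact: le_trans fp (d_le _ Dy).
Qed.

Lemma metric_projP D x : D !=set0 -> closed D -> pconvex D ->
  is_proj D x (metric_proj D x).
Proof.
by move=> Dne Dcl Dcvx; have [p pP] := is_proj_exists D x Dne Dcl Dcvx; exact: xgetI pP.
Qed.

Lemma halfsp_midpoint_le {p q y} :
  halfsp p y q -> pn (2^-1 *: (p + q) - y) <= 2^-1 * pn (p - q).
Proof.
rewrite /halfsp /= => qpy.
rewrite -(@ler_pXn2r _ 2) ?nnegrE ?mulr_ge0 ?invr_ge0 ?sqrtr_ge0 //.
rewrite exprMn !pnorm_sqr (dot_apollonius pinnerC pinnerZDl) expr2; lra.
Qed.

Lemma pnorm_half_diameter p q : 4 * pn (2^-1 *: (p + q) - p) ^+ 2 = pn (p - q) ^+ 2.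
Proof.
rewrite !pnorm_sqr (dot_apollonius pinnerC pinnerZDl) subrr (dot0r pinnerC pinnerZDl).
lra.
Qed.

Lemma halfsp_pythagoras {p y z} :
  halfsp p y z -> pn (y - p) ^+ 2 + pn (z - y) ^+ 2 <= pn (z - p) ^+ 2.
Proof.
by rewrite /halfsp /= !pnorm_sqr => h; exact: (dot_obtuse_pythagoras pinnerC pinnerZDl h).
Qed.

End ProductHilbert.

Theorem proposition12 (R : realType) (H G : completeNormedModType R)
  (ipH : H -> H -> R) (ipG : G -> G -> R)
  (hH : is_hilbert_inner ipH) (hG : is_hilbert_inner ipG)
  (Z : set (H * G)) (lam : nat -> R) (Hs Cs : nat -> set (H * G))
  (x xh : nat -> H * G) :
  Z !=set0 -> closed Z -> pconvex Z ->
  (forall n, 0 < lam n <= 1) ->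
  (forall n, closed (Hs n) /\ pconvex (Hs n) /\ Z `<=` Hs n) ->
  (forall n, closed (Cs n) /\ pconvex (Cs n) /\
             Z `<=` Cs n /\ Cs n `<=` halfsp ipH ipG (x n) (xh n)) ->
  (forall n, xh n = x n + lam n *: (metric_proj ipH ipG (Hs n) (x n) - x n)) ->
  (forall n, x n.+1 =
     metric_proj ipH ipG (halfsp ipH ipG (x 0%N) (x n) `&` Cs n) (x 0%N)) ->
  let xbar := metric_proj ipH ipG Z (x 0%N) in
  let w := 2^-1 *: (x 0%N + xbar) in
  let r := pnorm ipH ipG (w - x 0%N) in
  let b := fun n => 4 * r ^+ 2 - pnorm ipH ipG (x n - x 0%N) ^+ 2 in
  [/\ (forall n, pnorm ipH ipG (w - x n) <= 2^-1 * pnorm ipH ipG (x 0%N - xbar)),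
      (forall n, 0 <= b n /\ pnorm ipH ipG (x n - xbar) ^+ 2 <= b n) &
      ((forall n, halfsp ipH ipG (x 0%N) (x n) (x n.+1)) ->
         (forall n, b n.+1 <= b n) /\
         (forall n, x n != x n.+1 ->
            pnorm ipH ipG (xbar - x n.+1) ^+ 2 <
              pnorm ipH ipG (x 0%N - xbar) ^+ 2 - pnorm ipH ipG (x 0%N - x n) ^+ 2
            /\ b n.+1 < b n))].
Proof.
move=> Zne Zcl Zcvx _ _ CsP _ xS xbar w r b; set x0 := x 0%N.
have Zhalf n : Z `<=` halfsp ipH ipG x0 (x n).
  elim: n => [|n IH]; first by rewrite halfspxx.
  have [_ [Cs_cvx [ZCs _]]] := CsP n.
  have Q_cvx := pconvexI _ _ (halfsp_convex hH hG x0 (x n)) Cs_cvx.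
  rewrite xS; apply: subset_trans (metric_proj_halfsp hH hG _ _ Q_cvx).
  by move=> z Zz; split; [exact: IH | exact: ZCs].
have xbar_half n := Zhalf n xbar (metric_projP hH hG _ x0 Zne Zcl Zcvx).1.
have diam : 4 * r ^+ 2 = pnorm ipH ipG (x0 - xbar) ^+ 2 := pnorm_half_diameter hH hG _ _.
have b_ge n : pnorm ipH ipG (x n - xbar) ^+ 2 <= b n.
  have := halfsp_pythagoras hH hG (xbar_half n).
  by rewrite /b diam (pdistC hH hG xbar (x n)) (pdistC hH hG xbar x0); lra.
split => [n|n|xS_half]; first exact: (halfsp_midpoint_le hH hG (xbar_half n)).
  by split; [apply: le_trans (b_ge n); exact: sqr_ge0 | exact: b_ge].
have b_step n : b n.+1 + pnorm ipH ipG (x n.+1 - x n) ^+ 2 <= b n.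
  by have := halfsp_pythagoras hH hG (xS_half n); rewrite /b; lra.
have step_ge0 n := sqr_ge0 (pnorm ipH ipG (x n.+1 - x n)).
split => [n|n xn_neq]; first by have := b_step n; have := step_ge0 n; lra.
have step_gt0 : 0 < pnorm ipH ipG (x n.+1 - x n) ^+ 2.
  by rewrite (pnorm_sqr hH hG) (pinner_gt0 hH hG) // subr_eq0 eq_sym.
have := b_step n; have := b_ge n.+1.
rewrite /b diam (pdistC hH hG xbar (x n.+1)) (pdistC hH hG x0 (x n)); split; lra.
Qed.
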